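(* For the $\mathrm{ECR}(\beta,\lambda)$ model with i.i.d. sample of size $n$, let $C(\beta)=\beta^3-7\beta^2+10\beta+72$. The Cox–Snell second-order bias terms of the maximum likelihood estimators are $$B_\beta=\frac1n\Bigg[\beta^3+13\beta^2+122\beta+380-\frac{699840}{19321(\beta+5)}+\frac{96000}{361(\beta+6)}+\frac{432(4085783\beta^2-8192586\beta-40352456)}{2641\,C(\beta)^2}-\frac{12(70740551\beta^2+3809213278\beta-35831044156)}{6974881\,C(\beta)}\Bigg],$$ $$B_\lambda=\frac\lambda n\Bigg[8\beta+86+\frac{49}{270\beta}-\frac{1679616}{96605(\beta+5)}+\frac{80000}{1083(\beta+6)}-\frac{8(84037561\beta^2+21509105\beta-393761162)}{7923\,C(\beta)^2}+\frac{356431397749\beta^2-158970444943\beta-4636191041858}{376643574\,C(\beta)}\Bigg].$$ (The bias-corrected estimators are $\tilde\beta=\hat\beta-B_\beta(\hat\beta,\hat\lambda)$, $\tilde\lambda=\hat\lambda-B_\lambda(\hat\beta,\hat\lambda)$.)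
   Context: The $\mathrm{ECR}(\beta,\lambda)$ distribution ($\beta,\lambda>0$) has density $f(x)=\beta\lambda\,\frac{x}{(\lambda^2+x^2)^{3/2}}\left(1-\frac{\lambda}{\sqrt{\lambda^2+x^2}}\right)^{\beta-1}$, $x>0$. For an i.i.d. sample of size $n$ with log-likelihood $\ell=\sum\log f(X_i)$ and $\theta=(\theta_1,\theta_2)=(\beta,\lambda)$, set $\kappa_{rs}=\mathbb E[\partial^2\ell/\partial\theta_r\partial\theta_s]$, $\kappa_{rst}=\mathbb E[\partial^3\ell/\partial\theta_r\partial\theta_s\partial\theta_t]$, $\kappa_{rs}^{(t)}=\partial\kappa_{rs}/\partial\theta_t$, and let $(\kappa^{rs})$ be the inverse of the $2\times2$ matrix $(\kappa_{rs})$. The Cox–Snell second-order bias term of the MLE of $\theta_i$ is $B_{\theta_i}=\sum_{r,s,t\in\{1,2\}}\kappa^{ir}\kappa^{st}\left(\kappa_{rs}^{(t)}-\tfrac12\kappa_{rst}\right)$ (so that $\mathbb E(\hat\theta_i)-\theta_i=B_{\theta_i}+O(n^{-2})$). *)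

From Stdlib Require Import Reals Lra.
Open Scope R_scope.

(* Density of ECR(beta, lambda) at x > 0. (lambda^2+x^2)^(3/2) = sqrt(lambda^2+x^2)^3. *)
Definition ecr_pdf (b l x : R) : R :=
  b * l * x / (sqrt (l ^ 2 + x ^ 2)) ^ 3
  * Rpower (1 - l / sqrt (l ^ 2 + x ^ 2)) (b - 1).

Definition ecr_logpdf (b l x : R) : R := ln (ecr_pdf b l x).

(* Partial derivative w.r.t. parameter theta_r, theta = (theta_0, theta_1) = (beta, lambda)
   (index 0 = beta, any other index = lambda; only indices 0,1 are ever summed over). *)
Definition par_deriv (r : nat) (g : R -> R -> R) (b l v : R) : Prop :=
  match r with
  | O => derivable_pt_lim (fun u => g u l) b v
  | _ => derivable_pt_lim (fun u => g b u) l v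
  end.

Definition improper_int_0_inf (g : R -> R) (I : R) : Prop :=
  (forall a b, 0 < a -> a <= b -> inhabited (Riemann_integrable g a b)) /\
  (forall eps, eps > 0 -> exists d M, 0 < d /\
     forall a b (pr : Riemann_integrable g a b),
       0 < a < d -> M < b -> Rabs (RiemannInt pr - I) < eps).

(* Inverse of the 2x2 matrix (k r s)_{r,s in {0,1}} (indices >= 1 read as 1). *)
Definition inv2 (k : nat -> nat -> R) (i j : nat) : R :=
  let det := k 0%nat 0%nat * k 1%nat 1%nat - k 0%nat 1%nat * k 1%nat 0%nat in
  match i, j with
  | O, O => k 1%nat 1%nat / det
  | O, _ => - k 0%nat 1%nat / det
  | _, O => - k 1%nat 0%nat / det
  | _, _ => k 0%nat 0%nat / det
  end.

(* Cox--Snell term B_{theta_i} = sum_{r,s,t in {0,1}} k^{ir} k^{st} (k_rs^(t) - k_rst / 2),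
   with k2 r s = kappa_rs, k3 r s t = kappa_rst, kd r s t = d kappa_rs / d theta_t. *)
Definition cox_snell_bias (k2 : nat -> nat -> R) (k3 kd : nat -> nat -> nat -> R)
    (i : nat) : R :=
  sum_f_R0 (fun r => sum_f_R0 (fun s => sum_f_R0 (fun t =>
    inv2 k2 i r * inv2 k2 s t * (kd r s t - / 2 * k3 r s t)) 1) 1) 1.

Definition ecr_C (b : R) : R := b ^ 3 - 7 * b ^ 2 + 10 * b + 72.

From Stdlib Require Import Reals Lra Lia List.
From Coquelicot Require Import Coquelicot.
Open Scope R_scope.
Import ListNotations.

(* The distribution function of ECR(β, λ) is u(x)^β, where u = 1 - w and
   w = λ / √(λ² + x²); hence u(X)^β is uniform on (0, 1) and E[u(X)^k] = β / (β + k).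
   Every second and third partial derivative of log f in (β, λ) is a function of β alone or
   a polynomial in w over a power of λ, i.e. a polynomial P(u) = Σ c_k u^k, and
   E[P(u(X))] = Σ c_k β / (β + k) because u^β Q(u), with Q(y) = Σ c_k β / (β + k) y^k, is a
   primitive of P(u) f vanishing at 0 and tending to Q(1) at infinity.  This gives κ_rs,
   κ_rst and κ_rs^(t) in closed form, and the Cox–Snell sums become an identity between
   rational functions of β and λ. *)

Lemma par_deriv_unique_pos (t : nat) (g h : R -> R -> R) (b l d e : R) :
  0 < b -> 0 < l -> (forall u v, 0 < u -> 0 < v -> g u v = h u v) ->
  par_deriv t g b l d -> par_deriv t h b l e -> d = e.
Proof.
  intros Hb Hl Hgh.
  assert (Hloc : forall c (P : R -> Prop), 0 < c -> (forall y, 0 < y -> P y) -> locally c P).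
  { intros c P Hc HP. exists (mkposreal c Hc). intros y Hy. apply HP.
    change (Rabs (y - c) < c) in Hy. apply Rabs_lt_between in Hy. lra. }
  destruct t; simpl; intros Hd He; apply is_derive_Reals in Hd, He;
    apply is_derive_unique in He; rewrite <- He; symmetry; apply is_derive_unique;
    (eapply is_derive_ext_loc; [|exact Hd]); apply Hloc; auto.
Qed.

Lemma is_derive_eq_val (f : R -> R) (x d d' : R) : is_derive f x d -> d = d' -> is_derive f x d'.
Proof. intros H <-; exact H. Qed.

Ltac derive_side :=
  repeat split;
  first [eexists; eassumption | assumption | apply pow_nonzero; lra | lra | apply Rgt_not_eq; nra].

Lemma improper_int_0_inf_unique (g : R -> R) (I J : R) :
  improper_int_0_inf g I -> improper_int_0_inf g J -> I = J.
Proof.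
  intros [Hint HI] [_ HJ].
  apply cond_eq; intros eps Heps.
  destruct (HI (eps / 2)) as [d1 [M1 [Hd1 H1]]]; [lra|].
  destruct (HJ (eps / 2)) as [d2 [M2 [Hd2 H2]]]; [lra|].
  pose proof (Rmin_pos _ _ Hd1 Hd2). pose proof (Rmin_l d1 d2). pose proof (Rmin_r d1 d2).
  set (a := Rmin d1 d2 / 2) in *.
  assert (Ha : 0 < a < Rmin d1 d2) by (unfold a; lra).
  pose proof (Rmax_l (Rmax M1 M2) a). pose proof (Rmax_r (Rmax M1 M2) a).
  pose proof (Rmax_l M1 M2). pose proof (Rmax_r M1 M2).
  set (c := Rmax (Rmax M1 M2) a + 1).
  destruct (Hint a c) as [pr]; [unfold c; lra .. |].
  specialize (H1 a c pr ltac:(lra) ltac:(unfold c; lra)).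
  specialize (H2 a c pr ltac:(lra) ltac:(unfold c; lra)).
  replace (I - J) with ((RiemannInt pr - J) + - (RiemannInt pr - I)) by ring.
  pose proof (Rabs_triang (RiemannInt pr - J) (- (RiemannInt pr - I))).
  rewrite Rabs_Ropp in *. lra.
Qed.

Lemma improper_int_0_inf_ext (f g : R -> R) (I : R) :
  (forall x, 0 < x -> f x = g x) -> improper_int_0_inf f I -> improper_int_0_inf g I.
Proof.
  intros Hfg [Hint Hlim].
  assert (Hpos : forall a c x, 0 < a -> a <= c -> Rmin a c < x < Rmax a c -> f x = g x).
  { intros a c x Ha Hac Hx. rewrite Rmin_left in Hx by lra. apply Hfg; lra. }
  split.
  - intros a c Ha Hac. destruct (Hint a c Ha Hac) as [pr]. constructor.
    apply ex_RInt_Reals_0, (ex_RInt_ext f);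
      [intros x Hx; apply (Hpos a c); auto | exact (ex_RInt_Reals_1 _ _ _ pr)].
  - intros eps Heps. destruct (Hlim eps Heps) as [d [M [Hd HdM]]].
    exists d, (Rmax M d). split; auto.
    intros a c pr Ha Hc. pose proof (Rmax_l M d). pose proof (Rmax_r M d).
    destruct (Hint a c) as [prf]; [lra .. |].
    rewrite <- RInt_Reals, <- (RInt_ext f) by (intros x Hx; apply (Hpos a c); auto; lra).
    rewrite (RInt_Reals _ _ _ prf). apply HdM; lra.
Qed.

Lemma improper_int_0_inf_primitive (F f : R -> R) (A B : R) :
  (forall x, 0 < x -> is_derive F x (f x)) ->
  (forall x, 0 < x -> continuous f x) ->
  filterlim F (at_right 0) (locally A) ->
  filterlim F (Rbar_locally p_infty) (locally B) ->
  improper_int_0_inf f (B - A).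
Proof.
  intros HF Hf HA HB.
  assert (Hint : forall a c, 0 < a -> a <= c -> is_RInt f a c (F c - F a)).
  { intros a c Ha Hac. apply (is_RInt_derive F f a c);
      rewrite Rmin_left, Rmax_right by lra; intros y Hy; [apply HF | apply Hf]; lra. }
  split.
  - intros a c Ha Hac. constructor. apply ex_RInt_Reals_0. eexists. apply Hint; auto.
  - intros eps Heps.
    assert (Heps2 : 0 < eps / 2) by lra.
    destruct (proj1 (filterlim_locally F A) HA (mkposreal _ Heps2)) as [d Hd].
    destruct (proj1 (filterlim_locally F B) HB (mkposreal _ Heps2)) as [M HM].
    exists d, (Rmax M d). split; [apply cond_pos|].
    intros a c pr [Ha Had] Hc. pose proof (Rmax_l M d). pose proof (Rmax_r M d).
    rewrite <- RInt_Reals, (is_RInt_unique _ _ _ _ (Hint a c Ha ltac:(lra))).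
    assert (HFa : Rabs (F a - A) < eps / 2).
    { apply (Hd a); [change (Rabs (a - 0) < d); rewrite Rminus_0_r, Rabs_pos_eq|]; lra. }
    assert (HFc : Rabs (F c - B) < eps / 2) by (apply (HM c); lra).
    replace (F c - F a - (B - A)) with ((F c - B) + - (F a - A)) by ring.
    pose proof (Rabs_triang (F c - B) (- (F a - A))). rewrite Rabs_Ropp in *. lra.
Qed.

Lemma filterlim_Rpower_0 (e : R) : 0 < e ->
  filterlim (fun y => Rpower y e) (at_right 0) (locally 0).
Proof.
  intros He. unfold Rpower.
  apply (filterlim_comp _ _ _ (fun y => e * ln y) exp _ (Rbar_locally m_infty));
    [|exact is_lim_exp_m].
  apply (filterlim_comp _ _ _ ln (fun z => e * z) _ (Rbar_locally m_infty)); [exact is_lim_ln_0|].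
  intros P [M HM]. exists (M / e). intros z Hz. apply HM.
  apply Rmult_lt_reg_r with (/ e); [apply Rinv_0_lt_compat; lra|].
  replace (e * z * / e) with z by (field; lra). exact Hz.
Qed.

Fixpoint poly_from (k : nat) (cs : list R) (y : R) : R :=
  match cs with
  | [] => 0
  | c :: cs' => c * y ^ k + poly_from (S k) cs' y
  end.

Fixpoint poly_deriv_from (k : nat) (cs : list R) (y : R) : R :=
  match cs with
  | [] => 0
  | c :: cs' => c * (INR k * y ^ pred k) + poly_deriv_from (S k) cs' y
  end.

Lemma is_derive_poly_from k cs y : is_derive (poly_from k cs) y (poly_deriv_from k cs y).
Proof.
  revert k; induction cs as [|c cs IH]; intros k; simpl.
  - apply (is_derive_const 0).
  - apply (is_derive_plus (fun y => c * y ^ k)); [|apply IH].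
    auto_derive; [easy | ring].
Qed.

Lemma ex_derive_poly_deriv_from k cs y : ex_derive (poly_deriv_from k cs) y.
Proof.
  revert k; induction cs as [|c cs IH]; intros k; simpl.
  - apply ex_derive_const.
  - apply (ex_derive_plus (fun y => c * (INR k * y ^ pred k))); [auto_derive; easy | apply IH].
Qed.

Lemma cox_snell_bias_ext (k2 k2' : nat -> nat -> R) (k3 k3' kd kd' : nat -> nat -> nat -> R) i :
  (forall r s, k2 r s = k2' r s) -> (forall r s t, k3 r s t = k3' r s t) ->
  (forall r s t, kd r s t = kd' r s t) ->
  cox_snell_bias k2 k3 kd i = cox_snell_bias k2' k3' kd' i.
Proof.
  intros H2 H3 Hd. unfold cox_snell_bias, inv2. simpl. rewrite !H2, !H3, !Hd. reflexivity.
Qed.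

Definition ecr_s (l x : R) : R := sqrt (l ^ 2 + x ^ 2).
Definition ecr_w (l x : R) : R := l / ecr_s l x.
Definition ecr_u (l x : R) : R := 1 - ecr_w l x.

Lemma ecr_w_eq l x : ecr_w l x = 1 - ecr_u l x.
Proof. unfold ecr_u; ring. Qed.

Section EcrGeometry.
Variables l x : R.
Hypothesis Hl : 0 < l.

Lemma ecr_s_sq : ecr_s l x ^ 2 = l ^ 2 + x ^ 2.
Proof. unfold ecr_s; rewrite pow2_sqrt; nra. Qed.

Lemma ecr_s_pos : 0 < ecr_s l x.
Proof. unfold ecr_s; apply sqrt_lt_R0; nra. Qed.

Lemma ecr_w_pos : 0 < ecr_w l x.
Proof. unfold ecr_w; apply Rdiv_lt_0_compat; [lra | apply ecr_s_pos]. Qed.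

Hypothesis Hx : 0 < x.

Lemma ecr_w_le : ecr_w l x <= l / x.
Proof.
  pose proof ecr_s_pos; pose proof ecr_s_sq.
  unfold ecr_w; apply Rmult_le_compat_l; [lra|]; apply Rinv_le_contravar; nra.
Qed.

Lemma ecr_s_gt : l < ecr_s l x.
Proof. pose proof ecr_s_pos; pose proof ecr_s_sq; nra. Qed.

Lemma ecr_u_pos : 0 < ecr_u l x.
Proof.
  pose proof ecr_s_gt.
  unfold ecr_u, ecr_w.
  replace (1 - l / ecr_s l x) with ((ecr_s l x - l) / ecr_s l x) by (field; lra).
  apply Rdiv_lt_0_compat; lra.
Qed.

Lemma ecr_u_le : ecr_u l x <= x / l.
Proof.
  pose proof ecr_s_pos; pose proof ecr_s_sq.
  unfold ecr_u, ecr_w. set (s := ecr_s l x) in *.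
  replace (1 - l / s) with ((s - l) / s) by (field; lra).
  apply Rmult_le_reg_r with (s * l); [nra|].
  replace ((s - l) / s * (s * l)) with ((s - l) * l) by (field; lra).
  replace (x / l * (s * l)) with (x * s) by (field; lra).
  assert (s <= l + x) by nra. nra.
Qed.

End EcrGeometry.

Lemma ecr_logpdf_eq b l x : 0 < b -> 0 < l -> 0 < x ->
  ecr_logpdf b l x
  = ln b + ln l + ln x - 3 * ln (ecr_s l x) + (b - 1) * ln (ecr_u l x).
Proof.
  intros Hb Hl Hx. pose proof (ecr_s_pos l x Hl). pose proof (ecr_u_pos l x Hl Hx).
  unfold ecr_logpdf, ecr_pdf. fold (ecr_s l x). change (1 - l / ecr_s l x) with (ecr_u l x).
  unfold Rdiv. assert (0 < / ecr_s l x ^ 3) by (apply Rinv_0_lt_compat, pow_lt; lra).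
  rewrite !ln_mult, ln_Rinv, ln_pow by (try apply pow_lt; try apply exp_pos;
    repeat apply Rmult_lt_0_compat; lra).
  unfold Rpower; rewrite ln_exp. simpl INR. ring.
Qed.

Lemma ecr_pdf_eq b l x :
  ecr_pdf b l x = b * (l * x / ecr_s l x ^ 3) * Rpower (ecr_u l x) (b - 1).
Proof. unfold ecr_pdf, ecr_u, ecr_w, ecr_s, Rdiv. ring. Qed.

Ltac ecr_s_auto_derive l x :=
  auto_derive; replace (l * (l * 1) + x * (x * 1)) with (l ^ 2 + x ^ 2) by ring;
  [repeat split; first [nra | apply Rgt_not_eq; lra] |].

Lemma is_derive_ecr_u l x : 0 < l -> is_derive (ecr_u l) x (l * x / ecr_s l x ^ 3).
Proof.
  intros Hl. pose proof (ecr_s_pos l x Hl). pose proof (ecr_s_sq l x).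
  unfold ecr_u, ecr_w, ecr_s in *. ecr_s_auto_derive l x.
  set (s := sqrt (l ^ 2 + x ^ 2)) in *. field. lra.
Qed.

Lemma is_derive_ecr_w_l l x : 0 < l ->
  is_derive (fun v => ecr_w v x) l (ecr_w l x * (1 - ecr_w l x ^ 2) / l).
Proof.
  intros Hl. pose proof (ecr_s_pos l x Hl). pose proof (ecr_s_sq l x).
  unfold ecr_w, ecr_s in *. ecr_s_auto_derive l x.
  set (s := sqrt (l ^ 2 + x ^ 2)) in *. field. lra.
Qed.

Lemma is_derive_ecr_s_l l x : 0 < l -> is_derive (fun v => ecr_s v x) l (ecr_w l x).
Proof.
  intros Hl. pose proof (ecr_s_pos l x Hl). pose proof (ecr_s_sq l x).
  unfold ecr_w, ecr_s in *. ecr_s_auto_derive l x. field. lra.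
Qed.

Lemma is_derive_poly_ecr_w_div_pow (p p' : R -> R) (k : nat) l x : 0 < l ->
  (forall w, is_derive p w (p' w)) ->
  is_derive (fun v => p (ecr_w v x) / v ^ k) l
    ((p' (ecr_w l x) * (ecr_w l x - ecr_w l x ^ 3) - INR k * p (ecr_w l x)) / l ^ S k).
Proof.
  intros Hl Hp. pose proof (is_derive_ecr_w_l l x Hl).
  auto_derive; [repeat split; try (eexists; eauto); apply pow_nonzero; lra|].
  erewrite !is_derive_unique by eauto.
  destruct k; simpl; field; repeat split; try apply pow_nonzero; lra.
Qed.

Definition score_l_poly (b w : R) : R := 1 + (1 - b) * w - (2 + b) * w ^ 2.
Definition hess_bl_poly (w : R) : R := - w - w ^ 2.
Definition hess_ll_poly (b w : R) : R :=
  -1 - (2 + b) * w ^ 2 + (b - 1) * w ^ 3 + (4 + 2 * b) * w ^ 4.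
Definition third_bll_poly (w : R) : R := - w ^ 2 + w ^ 3 + 2 * w ^ 4.
Definition third_lll_poly (b w : R) : R :=
  2 + (b - 1) * w ^ 3 + (12 + 6 * b) * w ^ 4 + (3 - 3 * b) * w ^ 5 - (16 + 8 * b) * w ^ 6.

Definition ecr_score (t : nat) (b l x : R) : R :=
  match t with
  | O => / b + ln (ecr_u l x)
  | S _ => score_l_poly b (ecr_w l x) / l
  end.

Definition ecr_hessian (s t : nat) (b l x : R) : R :=
  match s, t with
  | O, O => - / b ^ 2
  | S _, S _ => hess_ll_poly b (ecr_w l x) / l ^ 2
  | _, _ => hess_bl_poly (ecr_w l x) / l
  end.

Definition ecr_third (r s t : nat) (b l x : R) : R :=
  match r, s, t with
  | O, O, O => 2 / b ^ 3
  | S _, S _, S _ => third_lll_poly b (ecr_w l x) / l ^ 3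
  | O, O, S _ | O, S _, O | S _, O, O => 0
  | _, _, _ => third_bll_poly (ecr_w l x) / l ^ 2
  end.

Section ClosedFormDerivatives.
Variables b l x : R.
Hypotheses (Hb : 0 < b) (Hl : 0 < l) (Hx : 0 < x).

Lemma is_derive_poly_ecr_w_div (p p' : R -> R) :
  (forall w, is_derive p w (p' w)) ->
  is_derive (fun v => p (ecr_w v x) / v) l
    ((p' (ecr_w l x) * (ecr_w l x - ecr_w l x ^ 3) - p (ecr_w l x)) / l ^ 2).
Proof.
  intros Hp. apply (is_derive_ext (fun v => p (ecr_w v x) / v ^ 1)).
  - intros v; rewrite pow_1; reflexivity.
  - replace (p (ecr_w l x)) with (INR 1 * p (ecr_w l x)) by (simpl; ring).
    exact (is_derive_poly_ecr_w_div_pow p p' 1 l x Hl Hp).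
Qed.

Lemma ecr_logpdf_closed_par_deriv t :
  par_deriv t (fun u v => ln u + ln v + ln x - 3 * ln (ecr_s v x) + (u - 1) * ln (ecr_u v x))
    b l (ecr_score t b l x).
Proof.
  pose proof (is_derive_ecr_s_l l x Hl). pose proof (is_derive_ecr_w_l l x Hl).
  pose proof (ecr_s_gt l x Hl Hx). pose proof (ecr_u_pos l x Hl Hx).
  destruct t; simpl; apply is_derive_Reals.
  - auto_derive; [lra|]. field; lra.
  - unfold ecr_u in *. auto_derive; [derive_side|].
    erewrite !is_derive_unique by eauto. unfold score_l_poly, ecr_w in *.
    field; repeat split; lra.
Qed.

Lemma ecr_score_par_deriv s t :
  par_deriv s (fun u v => ecr_score t u v x) b l (ecr_hessian s t b l x).
Proof.
  pose proof (is_derive_ecr_w_l l x Hl). pose proof (ecr_u_pos l x Hl Hx).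
  destruct s, t; simpl; apply is_derive_Reals.
  - auto_derive; [lra|]. field; lra.
  - unfold score_l_poly, hess_bl_poly. auto_derive; [lra|]. field; lra.
  - unfold ecr_u in *. auto_derive; [derive_side|].
    erewrite is_derive_unique by eauto. unfold hess_bl_poly. field; lra.
  - eapply is_derive_eq_val.
    + apply (is_derive_poly_ecr_w_div (score_l_poly b) (fun w => 1 - b - 2 * (2 + b) * w)).
      intros w; unfold score_l_poly; auto_derive; auto; ring.
    + unfold score_l_poly, hess_ll_poly; field; lra.
Qed.

Lemma ecr_hessian_par_deriv r s t :
  par_deriv r (fun u v => ecr_hessian s t u v x) b l (ecr_third r s t b l x).
Proof.
  pose proof (is_derive_ecr_w_l l x Hl).
  assert (Hbl : is_derive (fun v => hess_bl_poly (ecr_w v x) / v) l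
                  (third_bll_poly (ecr_w l x) / l ^ 2)).
  { eapply is_derive_eq_val.
    - apply (is_derive_poly_ecr_w_div hess_bl_poly (fun w => -1 - 2 * w)).
      intros w; unfold hess_bl_poly; auto_derive; auto; ring.
    - unfold hess_bl_poly, third_bll_poly; field; lra. }
  destruct r, s, t; simpl; apply is_derive_Reals; try exact (is_derive_const _ _);
    try exact Hbl.
  - auto_derive; [derive_side|]. field; lra.
  - unfold hess_ll_poly, third_bll_poly. auto_derive; [derive_side|]. field; lra.
  - eapply is_derive_eq_val.
    + apply (is_derive_poly_ecr_w_div_pow (hess_ll_poly b)
        (fun w => - 2 * (2 + b) * w + 3 * (b - 1) * w ^ 2 + 4 * (4 + 2 * b) * w ^ 3) 2 l x Hl).
      intros w; unfold hess_ll_poly; auto_derive; auto; ring.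
    + unfold hess_ll_poly, third_lll_poly; simpl; field; lra.
Qed.

End ClosedFormDerivatives.

Section LogLikelihoodDerivatives.
Variables (D1 : nat -> R -> R -> R -> R) (D2 : nat -> nat -> R -> R -> R -> R)
  (D3 : nat -> nat -> nat -> R -> R -> R -> R).
Hypothesis HD1 : forall t b' l' x, 0 < b' -> 0 < l' -> 0 < x ->
  par_deriv t (fun u v => ecr_logpdf u v x) b' l' (D1 t b' l' x).
Hypothesis HD2 : forall s t b' l' x, 0 < b' -> 0 < l' -> 0 < x ->
  par_deriv s (fun u v => D1 t u v x) b' l' (D2 s t b' l' x).
Hypothesis HD3 : forall r s t b' l' x, 0 < b' -> 0 < l' -> 0 < x ->
  par_deriv r (fun u v => D2 s t u v x) b' l' (D3 r s t b' l' x).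

Lemma loglik_d1_eq t b l x : 0 < b -> 0 < l -> 0 < x -> D1 t b l x = ecr_score t b l x.
Proof.
  intros Hb Hl Hx. apply (par_deriv_unique_pos t (fun u v => ecr_logpdf u v x)
    (fun u v => ln u + ln v + ln x - 3 * ln (ecr_s v x) + (u - 1) * ln (ecr_u v x)) b l); auto.
  - intros u v Hu Hv; apply ecr_logpdf_eq; auto.
  - apply ecr_logpdf_closed_par_deriv; auto.
Qed.

Lemma loglik_d2_eq s t b l x : 0 < b -> 0 < l -> 0 < x -> D2 s t b l x = ecr_hessian s t b l x.
Proof.
  intros Hb Hl Hx.
  apply (par_deriv_unique_pos s (fun u v => D1 t u v x) (fun u v => ecr_score t u v x) b l); auto.
  - intros u v Hu Hv; apply loglik_d1_eq; auto.
  - apply ecr_score_par_deriv; auto.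
Qed.

Lemma loglik_d3_eq r s t b l x : 0 < b -> 0 < l -> 0 < x ->
  D3 r s t b l x = ecr_third r s t b l x.
Proof.
  intros Hb Hl Hx.
  apply (par_deriv_unique_pos r (fun u v => D2 s t u v x) (fun u v => ecr_hessian s t u v x) b l);
    auto.
  - intros u v Hu Hv; apply loglik_d2_eq; auto.
  - apply ecr_hessian_par_deriv; auto.
Qed.

End LogLikelihoodDerivatives.

Section EcrLimits.
Variable l : R.
Hypothesis Hl : 0 < l.

Lemma filterlim_ecr_u_0 : filterlim (ecr_u l) (at_right 0) (at_right 0).
Proof.
  intros P [d Hd].
  assert (Hld : 0 < l * d) by (apply Rmult_lt_0_compat; [lra | apply cond_pos]).
  exists (mkposreal _ Hld). intros x Hx Hx0.
  change (Rabs (x - 0) < l * d) in Hx. rewrite Rminus_0_r, Rabs_pos_eq in Hx by lra.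
  pose proof (ecr_u_pos l x Hl Hx0). pose proof (ecr_u_le l x Hl Hx0).
  apply Hd; auto. change (Rabs (ecr_u l x - 0) < d). rewrite Rminus_0_r, Rabs_pos_eq by lra.
  apply Rle_lt_trans with (x / l); auto.
  apply Rmult_lt_reg_r with l; [lra|].
  unfold Rdiv; rewrite Rmult_assoc, Rinv_l, Rmult_1_r by lra. lra.
Qed.

Lemma filterlim_ecr_u_p_infty : filterlim (ecr_u l) (Rbar_locally p_infty) (locally 1).
Proof.
  apply filterlim_locally. intros eps. exists (l / eps). intros x Hx.
  assert (Hx0 : 0 < x) by (apply Rlt_trans with (l / eps); auto; apply Rdiv_lt_0_compat;
    [lra | apply cond_pos]).
  change (Rabs (ecr_u l x - 1) < eps). unfold ecr_u.
  replace (1 - ecr_w l x - 1) with (- ecr_w l x) by ring.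
  rewrite Rabs_Ropp, Rabs_pos_eq by (apply Rlt_le, ecr_w_pos; lra).
  apply Rle_lt_trans with (l / x); [apply ecr_w_le; auto|].
  pose proof (cond_pos eps). apply Rmult_lt_reg_r with (x / eps); [apply Rdiv_lt_0_compat; lra|].
  replace (l / x * (x / eps)) with (l / eps) by (field; lra).
  replace (eps * (x / eps)) with x by (field; lra). exact Hx.
Qed.

End EcrLimits.

Section EcrPrimitive.
Variables (b l : R) (Q Q' : R -> R).
Hypotheses (Hb : 0 < b) (Hl : 0 < l).
Hypothesis HQ : forall y, is_derive Q y (Q' y).
Hypothesis HQ' : forall y, ex_derive Q' y.

Lemma is_derive_ecr_primitive x : 0 < x ->
  is_derive (fun x => Rpower (ecr_u l x) b * Q (ecr_u l x)) x
    ((Q (ecr_u l x) + ecr_u l x * Q' (ecr_u l x) / b) * ecr_pdf b l x).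
Proof.
  intros Hx. pose proof (ecr_u_pos l x Hl Hx). pose proof (ecr_s_pos l x Hl).
  pose proof (is_derive_ecr_u l x Hl) as HU.
  pose proof (proj2 (is_derive_Reals _ _ _) (derivable_pt_lim_power (ecr_u l x) b H)) as HP.
  auto_derive; [repeat split; eexists; eauto|].
  erewrite !is_derive_unique by eauto.
  rewrite ecr_pdf_eq.
  replace (Rpower (ecr_u l x) b) with (ecr_u l x * Rpower (ecr_u l x) (b - 1))
    by (rewrite <- (Rpower_1 (ecr_u l x)) at 1 by lra; rewrite <- Rpower_plus; f_equal; ring).
  field; lra.
Qed.

Lemma ecr_primitive_integrand_continuous x : 0 < x ->
  continuous (fun x => (Q (ecr_u l x) + ecr_u l x * Q' (ecr_u l x) / b) * ecr_pdf b l x) x.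
Proof.
  intros Hx. pose proof (ecr_u_pos l x Hl Hx). pose proof (ecr_s_pos l x Hl).
  apply (@ex_derive_continuous R_AbsRing R_NormedModule).
  apply (ex_derive_ext (fun x => (Q (ecr_u l x) + ecr_u l x * Q' (ecr_u l x) / b)
    * (b * (l * x / ecr_s l x ^ 3) * Rpower (ecr_u l x) (b - 1)))).
  { intros y; rewrite ecr_pdf_eq; reflexivity. }
  assert (ex_derive (fun y => ecr_u l y) x) by (eexists; apply is_derive_ecr_u; lra).
  assert (ex_derive (fun y => ecr_s l y) x) by (unfold ecr_s; auto_derive; nra).
  assert (ex_derive (fun y => Q y) (ecr_u l x)) by (eexists; apply HQ).
  assert (ex_derive (fun y => Q' y) (ecr_u l x)) by apply HQ'.
  assert (ex_derive (fun y => Rpower y (b - 1)) (ecr_u l x))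
    by (eexists; apply is_derive_Reals, derivable_pt_lim_power; lra).
  assert (0 < ecr_s l x ^ 3) by (apply pow_lt; lra). simpl in *.
  auto_derive; repeat split; try assumption. apply Rgt_not_eq; lra.
Qed.

Lemma ecr_primitive_lim_0 :
  filterlim (fun x => Rpower (ecr_u l x) b * Q (ecr_u l x)) (at_right 0) (locally 0).
Proof.
  apply (filterlim_comp _ _ _ (ecr_u l) (fun y => Rpower y b * Q y) _ (at_right 0));
    [apply filterlim_ecr_u_0; auto|].
  assert (H : filterlim (fun y => Rpower y b * Q y) (at_right 0) (locally (0 * Q 0))).
  { apply (filterlim_comp_2 (G := locally 0) (H := locally (Q 0)) (fun y => Rpower y b) Q Rmult).
    - apply filterlim_Rpower_0; auto.
    - eapply filterlim_filter_le_1; [apply filter_le_within; apply locally_filter|].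
      apply (@ex_derive_continuous R_AbsRing R_NormedModule); eexists; apply HQ.
    - exact (@filterlim_mult R_AbsRing 0 (Q 0)). }
  rewrite Rmult_0_l in H. exact H.
Qed.

Lemma ecr_primitive_lim_p_infty :
  filterlim (fun x => Rpower (ecr_u l x) b * Q (ecr_u l x)) (Rbar_locally p_infty) (locally (Q 1)).
Proof.
  apply (filterlim_comp _ _ _ (ecr_u l) (fun y => Rpower y b * Q y) _ (locally 1));
    [apply filterlim_ecr_u_p_infty; auto|].
  replace (Q 1) with (Rpower 1 b * Q 1) by (unfold Rpower; rewrite ln_1, Rmult_0_r, exp_0; ring).
  apply (@ex_derive_continuous R_AbsRing R_NormedModule (fun y => Rpower y b * Q y)).
  apply ex_derive_mult; [|eexists; apply HQ].
  eexists; apply is_derive_Reals, derivable_pt_lim_power; lra.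
Qed.

Lemma improper_int_ecr_primitive :
  improper_int_0_inf (fun x => (Q (ecr_u l x) + ecr_u l x * Q' (ecr_u l x) / b) * ecr_pdf b l x)
    (Q 1).
Proof.
  replace (Q 1) with (Q 1 - 0) by ring.
  apply (improper_int_0_inf_primitive (fun x => Rpower (ecr_u l x) b * Q (ecr_u l x))).
  - exact is_derive_ecr_primitive.
  - exact ecr_primitive_integrand_continuous.
  - exact ecr_primitive_lim_0.
  - exact ecr_primitive_lim_p_infty.
Qed.

End EcrPrimitive.

Fixpoint ecr_moment_coeffs (b : R) (k : nat) (cs : list R) : list R :=
  match cs with
  | [] => []
  | c :: cs' => b * c / (b + INR k) :: ecr_moment_coeffs b (S k) cs'
  end.

Lemma ecr_moment_coeffs_primitive b k cs y : 0 < b ->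
  poly_from k (ecr_moment_coeffs b k cs) y
  + y * poly_deriv_from k (ecr_moment_coeffs b k cs) y / b = poly_from k cs y.
Proof.
  intros Hb. revert k; induction cs as [|c cs IH]; intros k; simpl.
  - field; lra.
  - rewrite <- (IH (S k)). pose proof (pos_INR k).
    assert (Hk : INR k * (y * y ^ pred k) = INR k * y ^ k) by (destruct k; simpl; ring).
    replace (y * (b * c / (b + INR k) * (INR k * y ^ pred k) + poly_deriv_from (S k)
      (ecr_moment_coeffs b (S k) cs) y) / b)
      with (c / (b + INR k) * (INR k * (y * y ^ pred k))
            + y * poly_deriv_from (S k) (ecr_moment_coeffs b (S k) cs) y / b) by (field; lra).
    rewrite Hk. field; lra.
Qed.

Lemma ecr_expectation_poly (g : R -> R) (I b l : R) (cs : list R) : 0 < b -> 0 < l ->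
  improper_int_0_inf g I ->
  (forall x, 0 < x -> g x = poly_from 0 cs (ecr_u l x) * ecr_pdf b l x) ->
  I = poly_from 0 (ecr_moment_coeffs b 0 cs) 1.
Proof.
  intros Hb Hl HI Hg. apply (improper_int_0_inf_unique g); auto.
  eapply improper_int_0_inf_ext;
    [|exact (improper_int_ecr_primitive b l _ _ Hb Hl (is_derive_poly_from 0 _)
              (ex_derive_poly_deriv_from 0 _))].
  intros x Hx. rewrite Hg, ecr_moment_coeffs_primitive; auto.
Qed.

(* Values for a single observation; for a sample of size n the cumulants are n times these. *)
Definition ecr_kappa2 (r s : nat) (b l : R) : R :=
  match r, s with
  | O, O => - / b ^ 2
  | S _, S _ => - b * (b ^ 2 + 11 * b + 36) / (l ^ 2 * (b + 2) * (b + 3) * (b + 4))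
  | _, _ => - (b + 4) / (l * (b + 1) * (b + 2))
  end.

Definition ecr_kappa3 (r s t : nat) (b l : R) : R :=
  match r, s, t with
  | O, O, O => 2 / b ^ 3
  | S _, S _, S _ =>
      b * (2 * b ^ 5 + 42 * b ^ 4 + 356 * b ^ 3 + 1698 * b ^ 2 + 5114 * b + 3732)
      / (l ^ 3 * (b + 1) * (b + 2) * (b + 3) * (b + 4) * (b + 5) * (b + 6))
  | O, O, S _ | O, S _, O | S _, O, O => 0
  | _, _, _ => - 2 * (b ^ 2 + 4 * b - 24) / (l ^ 2 * (b + 1) * (b + 2) * (b + 3) * (b + 4))
  end.

Definition ecr_kappa2_deriv (r s t : nat) (b l : R) : R :=
  match r, s, t with
  | O, O, O => 2 / b ^ 3
  | O, O, S _ => 0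
  | S _, S _, O => 2 * (b ^ 4 + 10 * b ^ 3 - 17 * b ^ 2 - 264 * b - 432)
                   / (l ^ 2 * (b + 2) ^ 2 * (b + 3) ^ 2 * (b + 4) ^ 2)
  | S _, S _, S _ => 2 * b * (b ^ 2 + 11 * b + 36) / (l ^ 3 * (b + 2) * (b + 3) * (b + 4))
  | _, _, O => (b ^ 2 + 8 * b + 10) / (l * (b + 1) ^ 2 * (b + 2) ^ 2)
  | _, _, S _ => (b + 4) / (l ^ 2 * (b + 1) * (b + 2))
  end.

Lemma ecr_kappa2_par_deriv (c b l : R) r s t : 0 < b -> 0 < l ->
  par_deriv t (fun u v => c * ecr_kappa2 r s u v) b l (c * ecr_kappa2_deriv r s t b l).
Proof.
  intros Hb Hl.
  destruct r, s, t; simpl; apply is_derive_Reals; auto_derive; try derive_side;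
    field; repeat split; lra.
Qed.

(* [cs] lists the coefficients, in powers of [ecr_u], of the closed-form derivative. *)
Ltac ecr_moment b l cs :=
  lazymatch goal with
  | |- ?I = _ => erewrite (ecr_expectation_poly _ I b l cs);
      [simpl; field; repeat split; lra | assumption | assumption | eauto |]
  end.

Section ExpectedDerivatives.
Variables (n : nat) (D1 : nat -> R -> R -> R -> R) (D2 : nat -> nat -> R -> R -> R -> R)
  (D3 : nat -> nat -> nat -> R -> R -> R -> R) (K2 : nat -> nat -> R -> R -> R)
  (K3 Kd : nat -> nat -> nat -> R) (b l : R).
Hypotheses (Hb : 0 < b) (Hl : 0 < l).
Hypothesis HD1 : forall t b' l' x, 0 < b' -> 0 < l' -> 0 < x ->
  par_deriv t (fun u v => ecr_logpdf u v x) b' l' (D1 t b' l' x).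
Hypothesis HD2 : forall s t b' l' x, 0 < b' -> 0 < l' -> 0 < x ->
  par_deriv s (fun u v => D1 t u v x) b' l' (D2 s t b' l' x).
Hypothesis HD3 : forall r s t b' l' x, 0 < b' -> 0 < l' -> 0 < x ->
  par_deriv r (fun u v => D2 s t u v x) b' l' (D3 r s t b' l' x).
Hypothesis HK2 : forall r s u v, 0 < u -> 0 < v ->
  improper_int_0_inf (fun x => INR n * D2 r s u v x * ecr_pdf u v x) (K2 r s u v).
Hypothesis HK3 : forall r s t,
  improper_int_0_inf (fun x => INR n * D3 r s t b l x * ecr_pdf b l x) (K3 r s t).
Hypothesis HKd : forall r s t, par_deriv t (fun u v => K2 r s u v) b l (Kd r s t).

Lemma kappa2_eq r s u v : 0 < u -> 0 < v -> K2 r s u v = INR n * ecr_kappa2 r s u v.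
Proof.
  intros Hu Hv. set (N := INR n) in *.
  assert (Hpt : forall x, 0 < x -> N * D2 r s u v x * ecr_pdf u v x
                 = N * ecr_hessian r s u v x * ecr_pdf u v x)
    by (intros x Hx; rewrite (loglik_d2_eq D1 D2 HD1 HD2); auto).
  destruct r as [|r], s as [|s].
  all: lazymatch goal with
  | |- K2 0 0 _ _ = _ => ecr_moment u v [- N / u ^ 2]
  | |- K2 (S _) (S _) _ _ = _ =>
      ecr_moment u v
        [N / v ^ 2 * (2 * u); N / v ^ 2 * (-9 - 9 * u); N / v ^ 2 * (19 + 14 * u);
         N / v ^ 2 * (-15 - 9 * u); N / v ^ 2 * (4 + 2 * u)]
  | |- _ => ecr_moment u v [N / v * (-2); N / v * 3; N / v * (-1)]
  end.
  all: intros x Hx; cbv beta; rewrite Hpt by auto; simpl; unfold hess_bl_poly, hess_ll_poly;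
    rewrite ?ecr_w_eq; field; lra.
Qed.

Lemma kappa3_eq r s t : K3 r s t = INR n * ecr_kappa3 r s t b l.
Proof.
  set (N := INR n) in *.
  assert (Hpt : forall x, 0 < x -> N * D3 r s t b l x * ecr_pdf b l x
                 = N * ecr_third r s t b l x * ecr_pdf b l x)
    by (intros x Hx; rewrite (loglik_d3_eq D1 D2 D3 HD1 HD2 HD3); auto).
  destruct r as [|r], s as [|s], t as [|t].
  all: lazymatch goal with
  | |- K3 0 0 0 = _ => ecr_moment b l [N * (2 / b ^ 3)]
  | |- K3 (S _) (S _) (S _) = _ =>
      ecr_moment b l
        [N / l ^ 3 * (-4 * b); N / l ^ 3 * (36 + 36 * b); N / l ^ 3 * (-141 - 111 * b);
         N / l ^ 3 * (243 + 165 * b); N / l ^ 3 * (-213 - 129 * b); N / l ^ 3 * (93 + 51 * b);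
         N / l ^ 3 * (-16 - 8 * b)]
  | |- K3 0 0 _ = _ => ecr_moment b l (@nil R)
  | |- K3 0 _ 0 = _ => ecr_moment b l (@nil R)
  | |- K3 _ 0 0 = _ => ecr_moment b l (@nil R)
  | |- _ => ecr_moment b l
      [N / l ^ 2 * 2; N / l ^ 2 * (-9); N / l ^ 2 * 14; N / l ^ 2 * (-9); N / l ^ 2 * 2]
  end.
  all: intros x Hx; cbv beta; rewrite Hpt by auto; simpl; unfold third_bll_poly, third_lll_poly;
    rewrite ?ecr_w_eq; field; lra.
Qed.

Lemma kappa2_deriv_eq r s t : Kd r s t = INR n * ecr_kappa2_deriv r s t b l.
Proof.
  apply (par_deriv_unique_pos t (fun u v => K2 r s u v)
    (fun u v => INR n * ecr_kappa2 r s u v) b l); auto.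
  - intros u v Hu Hv; apply kappa2_eq; auto.
  - apply ecr_kappa2_par_deriv; auto.
Qed.

End ExpectedDerivatives.

Definition ecr_kappa2_inv (i j : nat) (b l : R) : R :=
  match i, j with
  | O, O => - b ^ 2 * (b + 1) ^ 2 * (b + 2) * (b ^ 2 + 11 * b + 36) / ecr_C b
  | S _, S _ => - l ^ 2 * (b + 1) ^ 2 * (b + 2) ^ 2 * (b + 3) * (b + 4) / (b * ecr_C b)
  | _, _ => l * b * (b + 1) * (b + 2) * (b + 3) * (b + 4) ^ 2 / ecr_C b
  end.

Lemma ecr_C_pos b : 0 < b -> 0 < ecr_C b.
Proof.
  intros Hb. unfold ecr_C.
  assert (0 <= (b - 4) ^ 2 * (b + 1)) by (apply Rmult_le_pos; [apply pow2_ge_0 | lra]). nra.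
Qed.

Lemma ecr_kappa2_det (N b l : R) : 0 < b -> 0 < l ->
  N * ecr_kappa2 0 0 b l * (N * ecr_kappa2 1 1 b l)
  - N * ecr_kappa2 0 1 b l * (N * ecr_kappa2 1 0 b l)
  = N ^ 2 * ecr_C b / (l ^ 2 * b * (b + 1) ^ 2 * (b + 2) ^ 2 * (b + 3) * (b + 4)).
Proof. intros Hb Hl. simpl; unfold ecr_C; field; repeat split; lra. Qed.

Lemma inv2_ecr_kappa2 (N b l : R) i j : 0 < N -> 0 < b -> 0 < l ->
  inv2 (fun r s => N * ecr_kappa2 r s b l) i j = ecr_kappa2_inv i j b l / N.
Proof.
  intros HN Hb Hl. pose proof (ecr_C_pos b Hb).
  unfold inv2; cbv beta zeta. rewrite ecr_kappa2_det by assumption.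
  destruct i, j; simpl; field; repeat split; lra.
Qed.

Lemma ecr_cox_snell_bias (N b l : R) : 0 < N -> 0 < b -> 0 < l ->
  cox_snell_bias (fun r s => N * ecr_kappa2 r s b l) (fun r s t => N * ecr_kappa3 r s t b l)
    (fun r s t => N * ecr_kappa2_deriv r s t b l) 0 =
    / N * ( b ^ 3 + 13 * b ^ 2 + 122 * b + 380
      - 699840 / (19321 * (b + 5))
      + 96000 / (361 * (b + 6))
      + 432 * (4085783 * b ^ 2 - 8192586 * b - 40352456) / (2641 * ecr_C b ^ 2)
      - 12 * (70740551 * b ^ 2 + 3809213278 * b - 35831044156) / (6974881 * ecr_C b))
  /\
  cox_snell_bias (fun r s => N * ecr_kappa2 r s b l) (fun r s t => N * ecr_kappa3 r s t b l)
    (fun r s t => N * ecr_kappa2_deriv r s t b l) 1 =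
    l / N * ( 8 * b + 86 + 49 / (270 * b)
      - 1679616 / (96605 * (b + 5))
      + 80000 / (1083 * (b + 6))
      - 8 * (84037561 * b ^ 2 + 21509105 * b - 393761162) / (7923 * ecr_C b ^ 2)
      + (356431397749 * b ^ 2 - 158970444943 * b - 4636191041858) / (376643574 * ecr_C b)).
Proof.
  intros HN Hb Hl. pose proof (ecr_C_pos b Hb).
  unfold cox_snell_bias. cbv [sum_f_R0]. rewrite !inv2_ecr_kappa2 by assumption.
  cbn [ecr_kappa2_inv ecr_kappa3 ecr_kappa2_deriv]. unfold ecr_C in *.
  split; field; repeat split; lra.
Qed.

Theorem proposition11 :
  forall (n : nat) (b l : R), (1 <= n)%nat -> 0 < b -> 0 < l ->
  forall (D1 : nat -> R -> R -> R -> R)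
         (D2 : nat -> nat -> R -> R -> R -> R)
         (D3 : nat -> nat -> nat -> R -> R -> R -> R)
         (K2 : nat -> nat -> R -> R -> R)
         (K3 Kd : nat -> nat -> nat -> R),
  (forall t b' l' x, 0 < b' -> 0 < l' -> 0 < x ->
     par_deriv t (fun u v => ecr_logpdf u v x) b' l' (D1 t b' l' x)) ->
  (forall s t b' l' x, 0 < b' -> 0 < l' -> 0 < x ->
     par_deriv s (fun u v => D1 t u v x) b' l' (D2 s t b' l' x)) ->
  (forall r s t b' l' x, 0 < b' -> 0 < l' -> 0 < x ->
     par_deriv r (fun u v => D2 s t u v x) b' l' (D3 r s t b' l' x)) ->
  (forall r s b' l', 0 < b' -> 0 < l' ->
     improper_int_0_inf (fun x => INR n * D2 r s b' l' x * ecr_pdf b' l' x) (K2 r s b' l')) ->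
  (forall r s t,
     improper_int_0_inf (fun x => INR n * D3 r s t b l x * ecr_pdf b l x) (K3 r s t)) ->
  (forall r s t, par_deriv t (fun u v => K2 r s u v) b l (Kd r s t)) ->
  cox_snell_bias (fun r s => K2 r s b l) K3 Kd 0%nat =
    / INR n * ( b ^ 3 + 13 * b ^ 2 + 122 * b + 380
      - 699840 / (19321 * (b + 5))
      + 96000 / (361 * (b + 6))
      + 432 * (4085783 * b ^ 2 - 8192586 * b - 40352456) / (2641 * ecr_C b ^ 2)
      - 12 * (70740551 * b ^ 2 + 3809213278 * b - 35831044156) / (6974881 * ecr_C b))
  /\
  cox_snell_bias (fun r s => K2 r s b l) K3 Kd 1%nat =
    l / INR n * ( 8 * b + 86 + 49 / (270 * b)
      - 1679616 / (96605 * (b + 5))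
      + 80000 / (1083 * (b + 6))
      - 8 * (84037561 * b ^ 2 + 21509105 * b - 393761162) / (7923 * ecr_C b ^ 2)
      + (356431397749 * b ^ 2 - 158970444943 * b - 4636191041858) / (376643574 * ecr_C b)).
Proof.
  intros n b l Hn Hb Hl D1 D2 D3 K2 K3 Kd HD1 HD2 HD3 HK2 HK3 HKd.
  assert (Hbias : forall i, cox_snell_bias (fun r s => K2 r s b l) K3 Kd i
    = cox_snell_bias (fun r s => INR n * ecr_kappa2 r s b l)
        (fun r s t => INR n * ecr_kappa3 r s t b l)
        (fun r s t => INR n * ecr_kappa2_deriv r s t b l) i).
  { intros i; apply cox_snell_bias_ext; intros.
    - eapply kappa2_eq; eauto.
    - eapply kappa3_eq; eauto.
    - eapply kappa2_deriv_eq; eauto. }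
  rewrite !Hbias. apply ecr_cox_snell_bias; auto.
  apply lt_0_INR; lia.
Qed.
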